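(* Let $U=(u_1,\dots,u_d)$ be an orthonormal basis of $\mathbb{R}^d$, $d\ge2$, and let $x\in\mathbb{R}^d$ be random with two distinct indices $i,j$ chosen uniformly at random, $x_i,x_j$ independent uniform random signs $\pm1$, and $x_k=0$ otherwise; let $y=Ux$. Then $U$ is not a local maximum of $\max_{\Psi\in\mathcal D}\mathbb{E}_y\|\Psi^\star y\|_\infty^2$: for $U_\varepsilon=(u_1,\dots,u_{d-1},(u_d+\varepsilon u_1)/\sqrt{1+\varepsilon^2})$ and every $\varepsilon>0$ one has $\mathbb{E}_y\|U_\varepsilon^\star y\|_\infty^2>\mathbb{E}_y\|U^\star y\|_\infty^2=1$.
   Context: $\mathcal D$ is the set of $d\times d$ matrices with unit-norm columns; $\|\cdot\|_\infty$ is the maximum absolute entry. *)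

From HB Require Import structures.
From mathcomp Require Import all_boot all_order all_algebra.
Set Implicit Arguments. Unset Strict Implicit. Unset Printing Implicit Defensive.
Import Order.TTheory GRing.Theory Num.Theory.
Local Open Scope ring_scope.

Definition orthonormal_mx (R : rcfType) (d : nat) (U : 'M[R]_d) : Prop :=
  U^T *m U = 1%:M.

Definition unit_cols (R : rcfType) (d : nat) (A : 'M[R]_d) : Prop :=
  forall j : 'I_d, \sum_(i < d) (A i j) ^+ 2 = 1.

Definition normInf (R : rcfType) (d : nat) (v : 'cV[R]_d) : R :=
  \big[Num.max/0]_(k < d) `|v k 0|.

Definition sgnb (R : rcfType) (b : bool) : R := if b then 1 else -1.

Definition xvec (R : rcfType) (d : nat) (i j : 'I_d) (s t : bool) : 'cV[R]_d :=
  \col_k (if k == i then sgnb R s else if k == j then sgnb R t else 0).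

(* E_y || Psi^* y ||_inf^2 with y = U x, x as in the statement:
   (i,j) uniform among ordered pairs of distinct indices (equivalently,
   a uniform unordered pair), s,t independent uniform signs. *)
Definition objective (R : rcfType) (d : nat) (U Psi : 'M[R]_d) : R :=
  (\sum_(i < d) \sum_(j < d | j != i) \sum_(s : bool) \sum_(t : bool)
      normInf (Psi^T *m (U *m xvec R i j s t)) ^+ 2)
  / (d * (d - 1) * 4)%:R.

(* U_eps = (u_1, ..., u_{d-1}, (u_d + eps u_1)/sqrt(1+eps^2)), d = n.+2 *)
Definition Ueps (R : rcfType) (n : nat) (U : 'M[R]_n.+2) (eps : R) : 'M[R]_n.+2 :=
  \matrix_(k, l) (if l == ord_max
                  then (U k ord_max + eps * U k ord0) / Num.sqrt (1 + eps ^+ 2)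
                  else U k l).

From HB Require Import structures.
From mathcomp Require Import all_boot all_order all_algebra.
From mathcomp Require Import lra.
Import Order.TTheory GRing.Theory Num.Theory.
Local Open Scope ring_scope.

(* Write [q Psi x] for ||Psi^T (U x)||_inf^2.  The objective is
   the average of [q Psi x] over the 4 d (d - 1) equally likely samples x
   (ordered pair of distinct indices, two signs).
   - Every sample x has ||x||_inf = 1, so for Psi = U (U^T U = 1) every term
     equals 1 and the objective is exactly 1.
   - For Psi = U_eps the coordinates of U_eps^T U x are x_k for k <> d and
     (x_d + eps x_1) / sqrt(1 + eps^2) for k = d.  Since x has two nonzero
     coordinates of absolute value 1, at least one of them is a coordinate
     k <> d, so every term is >= 1; for x = e_1 + e_d the last coordinate is
     (1 + eps) / sqrt(1 + eps^2) > 1, so one term is > 1.  Hence the average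
     exceeds 1.
   - The columns of U_eps have unit norm by orthonormality of U. *)

Section MaxNorm.
Context {R : rcfType}.

Lemma normInf_ge {d} (v : 'cV[R]_d) k : `|v k 0| <= normInf v.
Proof. by rewrite /normInf (bigD1 k) //= le_max lexx. Qed.

Lemma normInf_le {d} (v : 'cV[R]_d) c :
  0 <= c -> (forall k, `|v k 0| <= c) -> normInf v <= c.
Proof.
move=> c_ge0 entry_le; rewrite /normInf; elim/big_ind: _ => // x y hx hy.
by rewrite ge_max hx hy.
Qed.

Lemma norm_sgnb b : `|sgnb R b| = 1.
Proof. by case: b; rewrite /sgnb ?normrN normr1. Qed.

Lemma normInf_xvec d (i j : 'I_d) s t :
  i != j -> normInf (xvec R i j s t) = 1.
Proof.
move=> ij; apply: le_anti; apply/andP; split.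
  apply: normInf_le => // k; rewrite mxE.
  case: (k == i); first by rewrite norm_sgnb.
  by case: (k == j); rewrite ?norm_sgnb ?normr0.
by have := normInf_ge (xvec R i j s t) i; rewrite mxE eqxx norm_sgnb.
Qed.

Lemma sqr_normInf_ge {d} (v : 'cV[R]_d) k c :
  0 <= c -> c <= `|v k 0| -> c ^+ 2 <= normInf v ^+ 2.
Proof.
move=> c_ge0 c_le; have c_le_norm := le_trans c_le (normInf_ge v k).
by apply: lerXn2r; rewrite ?nnegrE // (le_trans c_ge0).
Qed.

End MaxNorm.

Lemma sum_lt_at {R : numDomainType} {I : finType} {P : pred I} {F G : I -> R} i0 :
  P i0 -> (forall i, P i -> F i <= G i) -> F i0 < G i0 ->
  \sum_(i | P i) F i < \sum_(i | P i) G i.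
Proof.
move=> P_i0 le_FG lt_FG0; rewrite (bigD1 i0) //= [X in _ < X](bigD1 i0) //=.
by apply: ltr_leD => //; apply: ler_sum => i /andP[Pi _]; apply: le_FG.
Qed.

Lemma sum_delta {R : pzSemiRingType} {d} (F : 'I_d -> R) k :
  \sum_m (k == m)%:R * F m = F k.
Proof.
rewrite (bigD1 k) //= eqxx mul1r big1 ?addr0 // => m mk.
by rewrite eq_sym (negbTE mk) mul0r.
Qed.

Section Averaging.
Context {R : rcfType} {d : nat}.
Hypothesis d_gt1 : (1 < d)%N.

Lemma sum_samples_const (c : R) :
  \sum_(i < d) \sum_(j < d | j != i) \sum_(s : bool) \sum_(t : bool) c
  = (d * (d - 1) * 4)%:R * c.
Proof.
under eq_bigr do under eq_bigr do rewrite !sumr_const card_bool.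
under eq_bigr do rewrite sumr_const cardC1 card_ord.
rewrite sumr_const card_ord -!mulrnA mulr_natl.
by congr (_ *+ _); rewrite subn1 mulnA [RHS]mulnC (mulnC d).
Qed.

Lemma nsamples_gt0 : 0 < (d * (d - 1) * 4)%:R :> R.
Proof. by rewrite ltr0n !muln_gt0 subn_gt0 d_gt1 (ltn_trans _ d_gt1). Qed.

Lemma objective_eq1 (U Psi : 'M[R]_d) :
  (forall i j s t, j != i -> normInf (Psi^T *m (U *m xvec R i j s t)) ^+ 2 = 1) ->
  objective U Psi = 1.
Proof.
move=> term1; rewrite /objective.
under eq_bigr do under eq_bigr do under eq_bigr do under eq_bigr do
  rewrite term1 //.
by rewrite sum_samples_const mulr1 divff // gt_eqF // nsamples_gt0.
Qed.

Lemma objective_gt1 (U Psi : 'M[R]_d) i0 j0 s0 t0 :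
  (forall i j s t, j != i -> 1 <= normInf (Psi^T *m (U *m xvec R i j s t)) ^+ 2) ->
  j0 != i0 -> 1 < normInf (Psi^T *m (U *m xvec R i0 j0 s0 t0)) ^+ 2 ->
  1 < objective U Psi.
Proof.
move=> term_ge1 j0i0 term0_gt1.
rewrite /objective ltr_pdivlMr ?nsamples_gt0 // mul1r -[X in X < _]mulr1.
rewrite -sum_samples_const.
apply: (sum_lt_at i0) => // [i _|].
  apply: ler_sum => j ji; apply: ler_sum => s _; apply: ler_sum => t _.
  exact: term_ge1.
apply: (sum_lt_at j0) => // [j ji|].
  by apply: ler_sum => s _; apply: ler_sum => t _; apply: term_ge1.
apply: (sum_lt_at s0) => // [s _|].
  by apply: ler_sum => t _; apply: term_ge1.
by apply: (sum_lt_at t0) => // t _; apply: term_ge1.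
Qed.

End Averaging.

Section Perturbation.
Variables (R : rcfType) (n : nat) (U : 'M[R]_n.+2).
Hypothesis U_orth : orthonormal_mx U.

Lemma col_dot (a b : 'I_n.+2) : \sum_k U k a * U k b = (a == b)%:R.
Proof.
have := congr1 (fun M : 'M[R]_n.+2 => M a b) U_orth; rewrite !mxE => <-.
by apply: eq_bigr => k _; rewrite mxE.
Qed.

Variable eps : R.
Let s := Num.sqrt (1 + eps ^+ 2).

Lemma sqrt_norm_gt0 : 0 < s.
Proof. by rewrite sqrtr_gt0 ltr_pwDl // sqr_ge0. Qed.

Lemma sqr_sqrt_norm : s ^+ 2 = 1 + eps ^+ 2.
Proof. by rewrite sqr_sqrtr // addr_ge0 // sqr_ge0. Qed.

(* The last column (u_d + eps u_1)/sqrt(1 + eps^2) has unit norm because u_d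
   and u_1 are orthonormal; the other columns are those of U. *)
Lemma Ueps_unit_cols : unit_cols (Ueps U eps).
Proof.
move=> j; under eq_bigr do rewrite mxE -/s.
case: (j == ord_max); last by under eq_bigr do rewrite expr2; rewrite col_dot eqxx.
under eq_bigr do rewrite expr_div_n sqr_sqrt_norm sqrrD exprMn !expr2.
rewrite -mulr_suml !big_split /=.
under [in X in _ + X + _]eq_bigr do rewrite mulrCA.
rewrite -!mulr_sumr !col_dot eqxx /= !mulr0 !mulr1 !addr0 -expr2.
by rewrite divff // gt_eqF // ltr_pwDl // sqr_ge0.
Qed.

Lemma Ueps_gram_row k m :
  k != ord_max -> ((Ueps U eps)^T *m U) k m = (k == m)%:R.
Proof.
move=> k_lt; rewrite !mxE -col_dot.
by apply: eq_bigr => l _; rewrite !mxE (negbTE k_lt).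
Qed.

Lemma Ueps_gram_last m :
  ((Ueps U eps)^T *m U) ord_max m = ((ord_max == m)%:R + eps * (ord0 == m)%:R) / s.
Proof.
rewrite !mxE -!col_dot.
under eq_bigr do rewrite !mxE eqxx -/s mulrAC mulrDl -mulrA.
by rewrite -mulr_suml big_split /= -mulr_sumr.
Qed.

Lemma Ueps_coord (x : 'cV[R]_n.+2) k :
  k != ord_max -> ((Ueps U eps)^T *m (U *m x)) k 0 = x k 0.
Proof.
move=> k_lt; rewrite mulmxA mxE.
by under eq_bigr do rewrite Ueps_gram_row //; apply: sum_delta.
Qed.

Lemma Ueps_coord_last (x : 'cV[R]_n.+2) :
  ((Ueps U eps)^T *m (U *m x)) ord_max 0 = (x ord_max 0 + eps * x ord0 0) / s.
Proof.
rewrite mulmxA mxE.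
under eq_bigr do rewrite Ueps_gram_last mulrAC mulrDl -mulrA.
by rewrite -mulr_suml big_split /= -mulr_sumr !sum_delta.
Qed.

(* Each sample has a nonzero coordinate k <> d, which U_eps preserves. *)
Lemma Ueps_term_ge1 i j b c : j != i ->
  1 <= normInf ((Ueps U eps)^T *m (U *m xvec R i j b c)) ^+ 2.
Proof.
move=> ji; rewrite -(expr1n _ 2).
have [i_max | i_lt] := eqVneq i ord_max.
  have j_lt : j != ord_max by rewrite -i_max.
  apply: (sqr_normInf_ge _ j) => //.
  by rewrite Ueps_coord // mxE (negbTE ji) eqxx norm_sgnb.
apply: (sqr_normInf_ge _ i) => //.
by rewrite Ueps_coord // mxE eqxx norm_sgnb.
Qed.

(* For x = e_1 + e_d the last coordinate is (1 + eps)/sqrt(1 + eps^2) > 1. *)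
Lemma Ueps_term_gt1 : 0 < eps ->
  1 < normInf ((Ueps U eps)^T *m (U *m xvec R ord0 ord_max true true)) ^+ 2.
Proof.
move=> eps_gt0; set v := _ *m _.
have ratio_ge0 : 0 <= (1 + eps) / s.
  by rewrite divr_ge0 ?(ltW sqrt_norm_gt0) // addr_ge0 // ltW.
have last_ge : (1 + eps) / s <= `|v ord_max 0|.
  by rewrite /v Ueps_coord_last !mxE eqxx /= /sgnb mulr1 ger0_norm.
apply: lt_le_trans (sqr_normInf_ge _ _ _ ratio_ge0 last_ge).
rewrite expr_div_n sqr_sqrt_norm ltr_pdivlMr ?ltr_pwDl ?sqr_ge0 //.
rewrite mul1r sqrrD expr1n; lra.
Qed.

End Perturbation.

(* dimension d = n.+2, i.e. d >= 2 *)
Theorem mainTheorem8 (R : rcfType) (n : nat) (U : 'M[R]_n.+2)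
  (hU : orthonormal_mx U) :
  objective U U = 1 /\
  (forall eps : R, 0 < eps ->
     unit_cols (Ueps U eps) /\ objective U U < objective U (Ueps U eps)).
Proof.
have objective_U : objective U U = 1.
  apply: objective_eq1 => // i j b c ji.
  by rewrite mulmxA hU mul1mx normInf_xvec 1?eq_sym // expr1n.
split=> // eps eps_gt0; split; first exact: Ueps_unit_cols.
rewrite objective_U (objective_gt1 _ _ _ ord0 ord_max true true) //.
- by move=> i j b c; apply: Ueps_term_ge1.
- exact: Ueps_term_gt1.
Qed.
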